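(* Let $L$ be an $n\times n$ nonsingular M-matrix with integer entries. A vector $f\in\mathbb{Z}^n$ with $f\ge 0$ is $z$-superstable with respect to $L$ if and only if $f$ is the minimizer of $\min_{g\sim f,\ g\ge 0}E(g)$ (minimum over $g\in\mathbb{Z}^n$).
   Context: A Z-matrix is a square real matrix whose off-diagonal entries are all $\le 0$. A nonsingular M-matrix is a Z-matrix $L$ that is invertible with $L^{-1}$ having all entries nonnegative. Vector inequalities are entrywise. For $f,g\in\mathbb{Z}^n$, $f\sim g$ means $g-f=Lz$ for some $z\in\mathbb{Z}^n$. For $q\in\mathbb{Z}^n$, $E(q)=\|L^{-1}q\|_2^2$ with $\|v\|_2^2=v\cdot v$. A vector $f\in\mathbb{Z}^n$ with $f\ge 0$ is $z$-superstable with respect to $L$ if for every $z\in\mathbb{Z}^n$ with $z\ge0$ and $z\ne0$ there exists $i$ with $f_i-(Lz)_i<0$. *)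

From HB Require Import structures.
From mathcomp Require Import all_boot all_order all_algebra.
Set Implicit Arguments. Unset Strict Implicit. Unset Printing Implicit Defensive.
Import Order.TTheory GRing.Theory Num.Theory.
Local Open Scope ring_scope.

Definition toQ (m n : nat) (A : 'M[int]_(m, n)) : 'M[rat]_(m, n) :=
  map_mx (fun x : int => x%:~R) A.

Definition Zmatrix (n : nat) (L : 'M[int]_n) : Prop :=
  forall i j : 'I_n, i != j -> L i j <= 0.

Definition nonsingular_Mmatrix (n : nat) (L : 'M[int]_n) : Prop :=
  Zmatrix L /\ toQ L \in unitmx /\
  forall i j : 'I_n, 0 <= invmx (toQ L) i j.

Definition vge0 (n : nat) (v : 'cV[int]_n) : Prop := forall i : 'I_n, 0 <= v i 0.

Definition equiv_L (n : nat) (L : 'M[int]_n) (f g : 'cV[int]_n) : Prop :=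
  exists z : 'cV[int]_n, g - f = L *m z.

Definition energy (n : nat) (L : 'M[int]_n) (q : 'cV[int]_n) : rat :=
  \sum_(i < n) ((invmx (toQ L) *m toQ q) i 0) ^+ 2.

Definition z_superstable (n : nat) (L : 'M[int]_n) (f : 'cV[int]_n) : Prop :=
  vge0 f /\
  forall z : 'cV[int]_n, vge0 z -> z != 0 ->
    exists i : 'I_n, f i 0 - (L *m z) i 0 < 0.

(* f is THE minimizer of E over {g | g ~ f, g >= 0}: f itself is admissible and
   every other admissible g has strictly larger energy. *)
Definition is_energy_minimizer (n : nat) (L : 'M[int]_n) (f : 'cV[int]_n) : Prop :=
  vge0 f /\
  forall g : 'cV[int]_n, equiv_L L f g -> vge0 g -> g != f ->
    energy L f < energy L g.

(* With M = L^-1 >= 0, a configuration g = f + L z equivalent to f has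
   M g = M f + z, so E(g) = sum_i ((M f)_i + z_i)^2 with M f >= 0.
   If f is z-superstable, every admissible g comes from a firing vector
   z >= 0 (split z into positive and negative parts; the Z-sign pattern of L
   shows f - L z^- >= 0, so z^- = 0), and then E(g) > E(f) unless z = 0.
   Conversely, if f - L z >= 0 for some z >= 0, z <> 0, then f - L z is an
   admissible configuration of energy at most E(f). *)
From mathcomp Require Import all_boot all_order all_algebra.
From mathcomp Require Import ring lra.
Import Order.TTheory GRing.Theory Num.Theory.
Set Implicit Arguments.
Unset Strict Implicit.
Unset Printing Implicit Defensive.
Local Open Scope ring_scope.

Lemma sum_sqr_le_addr (R : realDomainType) (I : finType) (P : pred I)
    (a b : I -> R) :
  (forall i, 0 <= a i) -> (forall i, 0 <= b i) ->
  \sum_(i | P i) a i ^+ 2 <= \sum_(i | P i) (a i + b i) ^+ 2.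
Proof.
move=> a_ge0 b_ge0; apply: ler_sum => i _.
have := a_ge0 i; have := b_ge0 i; nra.
Qed.

Lemma sum_sqr_lt_addr (R : realDomainType) (I : finType) (a b : I -> R) k :
  (forall i, 0 <= a i) -> (forall i, 0 <= b i) -> 0 < b k ->
  \sum_i a i ^+ 2 < \sum_i (a i + b i) ^+ 2.
Proof.
move=> a_ge0 b_ge0 bk_gt0.
rewrite (bigD1 k) //= [X in _ < X](bigD1 k) //=.
apply: ltr_leD; last exact: sum_sqr_le_addr.
by have := a_ge0 k; nra.
Qed.

Section PosNegParts.
Variables (R : realDomainType) (n : nat).
Implicit Type z : 'cV[R]_n.

Definition pos_part z : 'cV[R]_n := \col_i Num.max (z i 0) 0.
Definition neg_part z : 'cV[R]_n := \col_i Num.max (- z i 0) 0.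

Lemma pos_part_ge0 z i : 0 <= pos_part z i 0.
Proof. by rewrite mxE le_max lexx orbT. Qed.

Lemma neg_part_ge0 z i : 0 <= neg_part z i 0.
Proof. by rewrite mxE le_max lexx orbT. Qed.

Lemma pos_part_eq0 z i : z i 0 <= 0 -> pos_part z i 0 = 0.
Proof. by move=> zi_le0; rewrite mxE max_r. Qed.

Lemma neg_part_eq0 z i : 0 <= z i 0 -> neg_part z i 0 = 0.
Proof. by move=> zi_ge0; rewrite mxE max_r // oppr_le0. Qed.

Lemma pos_partBneg_part z : pos_part z - neg_part z = z.
Proof.
apply/matrixP => i j; rewrite (ord1 j) [LHS]mxE [X in _ + X]mxE.
have [zi_ge0|zi_lt0] := lerP 0 (z i 0).
  by rewrite neg_part_eq0 // mxE max_l ?subr0.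
by rewrite pos_part_eq0 ?ltW // mxE max_l ?sub0r ?opprK // oppr_ge0 ltW.
Qed.

End PosNegParts.

Lemma Zmatrix_mulmx_le0 n (L : 'M[int]_n) (v : 'cV[int]_n) i :
  Zmatrix L -> vge0 v -> v i 0 = 0 -> (L *m v) i 0 <= 0.
Proof.
move=> L_Z v_ge0 vi0; rewrite mxE; apply: sumr_le0 => j _.
have [<-|ij] := eqVneq i j; first by rewrite vi0 mulr0.
exact: mulr_le0_ge0 (L_Z _ _ ij) (v_ge0 j).
Qed.

Lemma vge0_neq0 n (z : 'cV[int]_n) : vge0 z -> z != 0 -> exists k, 0 < z k 0.
Proof.
move=> z_ge0 /eqP z_neq0.
have [/existsP[k zk_neq0]|/existsPn z_eq0] := boolP [exists k, z k 0 != 0].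
  by exists k; rewrite lt_def zk_neq0 z_ge0.
case: z_neq0; apply/matrixP => i j.
by rewrite (ord1 j) mxE; apply/eqP; rewrite -[_ == _]negbK z_eq0.
Qed.

Lemma toQ_ge0 n (z : 'cV[int]_n) i : vge0 z -> 0 <= toQ z i 0.
Proof. by move=> z_ge0; rewrite mxE ler0z. Qed.

Section NonsingularMmatrix.
Variables (n : nat) (L : 'M[int]_n).
Hypothesis L_M : nonsingular_Mmatrix L.
Local Notation M := (invmx (toQ L)).

Lemma Mmatrix_toQ_unit : toQ L \in unitmx.
Proof. by case: L_M => _ []. Qed.

Lemma Mmatrix_inv_mulmx_ge0 (v : 'cV[int]_n) i :
  vge0 v -> 0 <= (M *m toQ v) i 0.
Proof.
move=> v_ge0; rewrite mxE; apply: sumr_ge0 => j _.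
by apply: mulr_ge0; [case: L_M => _ [_ ->] | exact: toQ_ge0].
Qed.

Lemma Mmatrix_inv_mulmx_shift (f z : 'cV[int]_n) :
  M *m toQ (f + L *m z) = M *m toQ f + toQ z.
Proof. by rewrite /toQ map_mxD map_mxM mulmxDr mulKmx ?Mmatrix_toQ_unit. Qed.

Lemma energy_shift (f z : 'cV[int]_n) :
  energy L (f + L *m z) = \sum_i ((M *m toQ f) i 0 + toQ z i 0) ^+ 2.
Proof.
by apply: eq_bigr => i _; rewrite Mmatrix_inv_mulmx_shift mxE.
Qed.

Lemma Mmatrix_mulmx_inj : injective (fun z : 'cV[int]_n => L *m z).
Proof.
move=> z1 z2 /(congr1 (fun g => M *m toQ (0 + g))).
rewrite !Mmatrix_inv_mulmx_shift => /addrI /matrixP toQ_eq.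
by apply/matrixP => i j; have := toQ_eq i j; rewrite !mxE => /intr_inj.
Qed.

Lemma Mmatrix_mulmx_eq0 (z : 'cV[int]_n) : (L *m z == 0) = (z == 0).
Proof.
apply/eqP/eqP => [Lz0|->]; last exact: mulmx0.
by apply: Mmatrix_mulmx_inj; rewrite /= Lz0 mulmx0.
Qed.

Lemma z_superstable_shift_vge0 (f z : 'cV[int]_n) :
  z_superstable L f -> vge0 (f + L *m z) -> vge0 z.
Proof.
have L_Z : Zmatrix L by case: L_M.
move=> [f_ge0 f_stable] g_ge0.
have p_ge0 : vge0 (pos_part z) by move=> i; apply: pos_part_ge0.
have q_ge0 : vge0 (neg_part z) by move=> i; apply: neg_part_ge0.
have fq_ge0 i : 0 <= f i 0 - (L *m neg_part z) i 0.
  have [zi_ge0|zi_lt0] := lerP 0 (z i 0).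
    have := f_ge0 i; have := Zmatrix_mulmx_le0 L_Z q_ge0 (neg_part_eq0 zi_ge0).
    lra.
  have -> : f i 0 - (L *m neg_part z) i 0
          = (f + L *m z) i 0 - (L *m pos_part z) i 0.
    by rewrite -{2}(pos_partBneg_part z) mulmxBr !mxE; ring.
  have := g_ge0 i.
  have := Zmatrix_mulmx_le0 L_Z p_ge0 (pos_part_eq0 (ltW zi_lt0)).
  lra.
have [q0|q_neq0] := eqVneq (neg_part z) 0.
  by rewrite -(pos_partBneg_part z) q0 subr0.
have [i] := f_stable _ q_ge0 q_neq0.
by rewrite ltNge fq_ge0.
Qed.

Lemma energy_subr_le (f z : 'cV[int]_n) :
  vge0 z -> vge0 (f - L *m z) -> energy L (f - L *m z) <= energy L f.
Proof.
move=> z_ge0 g_ge0; rewrite -{2}(subrK (L *m z) f) energy_shift.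
apply: sum_sqr_le_addr => i; first exact: Mmatrix_inv_mulmx_ge0.
exact: toQ_ge0.
Qed.

Lemma energy_addr_lt (f z : 'cV[int]_n) :
  vge0 f -> vge0 z -> z != 0 -> energy L f < energy L (f + L *m z).
Proof.
move=> f_ge0 z_ge0 /(vge0_neq0 z_ge0)[k zk_gt0].
rewrite energy_shift; apply: (sum_sqr_lt_addr (k := k)).
- by move=> i; apply: Mmatrix_inv_mulmx_ge0.
- by move=> i; apply: toQ_ge0.
- by rewrite mxE ltr0z.
Qed.

End NonsingularMmatrix.

Theorem mainTheorem5 (n : nat) (L : 'M[int]_n) (f : 'cV[int]_n) :
  nonsingular_Mmatrix L -> vge0 f ->
  (z_superstable L f <-> is_energy_minimizer L f).
Proof.
move=> L_M f_ge0; split.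
- move=> f_stable; split=> // g [z g_eq].
  have -> : g = f + L *m z by rewrite -g_eq addrC subrK.
  move=> g_ge0 g_neq_f.
  apply: energy_addr_lt => //.
    exact: z_superstable_shift_vge0 f_stable g_ge0.
  by apply: contraNneq g_neq_f => ->; rewrite mulmx0 addr0.
- move=> [_ f_min]; split=> // z z_ge0 z_neq0.
  have [/existsP //|/existsPn fz_ge0] :=
    boolP [exists i, f i 0 - (L *m z) i 0 < 0].
  have g_ge0 : vge0 (f - L *m z).
    by move=> i; rewrite mxE [X in _ + X]mxE leNgt fz_ge0.
  have g_neq_f : f - L *m z != f.
    by rewrite -subr_eq0 addrAC subrr add0r oppr_eq0 (Mmatrix_mulmx_eq0 L_M).
  have g_equiv_f : equiv_L L f (f - L *m z).
    by exists (- z); rewrite mulmxN addrAC subrr add0r.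
  have := f_min _ g_equiv_f g_ge0 g_neq_f.
  by rewrite ltNge energy_subr_le.
Qed.
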